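(* Let $g(x)=(x+1)\ln(x+1)-x\ln x$. For $\eta\in[0,1)$, $N_S>0$ and $\lambda\in(0,1]$ with $\lambda(1-\eta)N_S\ge 2$, \[ \big[g(N_S)+g(\eta N_S)-g((1-\eta)N_S)\big]-\big[g(\lambda N_S)+g(\eta N_S)-g((1-\eta)\lambda N_S)\big]\le \frac{5}{6\lambda N_S(1-\eta)} . \] Consequently, for $\epsilon>0$, choosing $\lambda=5/[6\epsilon N_S(1-\eta)\ln 2]$, whenever $\lambda(1-\eta)N_S\ge2$, makes the limited-entanglement classical rate $g_2(\lambda N_S)+g_2(\eta N_S)-g_2((1-\eta)\lambda N_S)$ within $\epsilon$ bits of the entanglement-assisted classical capacity $g_2(N_S)+g_2(\eta N_S)-g_2((1-\eta)N_S)$, where $g_2(x)=(x+1)\log_2(x+1)-x\log_2 x$.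
   Context: These quantities refer to a pure-loss bosonic channel with transmissivity $\eta$ and mean input photon number constraint $N_S$: $g(N_S)+g(\eta N_S)-g((1-\eta)N_S)$ is its entanglement-assisted classical capacity, and $g(\lambda N_S)+g(\eta N_S)-g((1-\eta)\lambda N_S)$ is the classical rate achievable by a trade-off code dedicating a fraction $\lambda$ of the photons to shared entanglement. *)

From Stdlib Require Import Reals.
Open Scope R_scope.

(* g(x) = (x+1) ln(x+1) - x ln x  (natural log).  Stdlib's ln is total with
   ln 0 = 0, so g 0 = 0, matching the convention 0 ln 0 = 0. *)
Definition g (x : R) : R := (x + 1) * ln (x + 1) - x * ln x.

Definition log2 (x : R) : R := ln x / ln 2.
Definition g2 (x : R) : R := (x + 1) * log2 (x + 1) - x * log2 x.

Definition EA_capacity (gf : R -> R) (eta NS : R) : R :=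
  gf NS + gf (eta * NS) - gf ((1 - eta) * NS).

(* rate of the trade-off code using a fraction lambda of photons for entanglement *)
Definition tradeoff_rate (gf : R -> R) (eta NS lambda : R) : R :=
  gf (lambda * NS) + gf (eta * NS) - gf ((1 - eta) * lambda * NS).

From Stdlib Require Import Reals Lra.
From Coquelicot Require Import Coquelicot.
Open Scope R_scope.

(* With a = 1 - eta and x = lambda NS, the gap is h(NS) - h(x) for
   h(t) = g(t) - g(a t), whose derivative is ln(1 + 1/t) - a ln(1 + 1/(a t)).
   This derivative is nonnegative because s |-> s ln(1 + c/s) is increasing,
   and the Taylor bounds u - u^2/2 <= ln(1 + u) <= u - u^2/2 + u^3/3 bound it by
   1/(2 a t^2) + 1/(3 t^3).  Integrating from x gives
   h(NS) - h(x) <= 1/(2 a x) + 1/(6 x^2) <= 5/(6 a x).  The base-2 statement is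
   the same inequality divided by ln 2, for the lambda that makes
   5/(6 a x) = eps ln 2. *)

Lemma is_derive_le_increment (f g df dg : R -> R) a b : a <= b ->
  (forall x, a <= x <= b -> is_derive f x (df x)) ->
  (forall x, a <= x <= b -> is_derive g x (dg x)) ->
  (forall x, a <= x <= b -> df x <= dg x) ->
  f b - f a <= g b - g a.
Proof.
intros Hab Hf Hg Hle.
assert (Hd : forall x, a <= x <= b ->
  is_derive (fun t => g t - f t) x (dg x - df x)).
{ intros x Hx. apply (is_derive_minus g f); auto. }
destruct (Req_dec a b) as [<-|Hne]; [lra|].
destruct (MVT_gen (fun t => g t - f t) a b (fun t => dg t - df t))
  as [c [Hc Heq]];
  rewrite ?Rmin_left, ?Rmax_right in * by lra.
- intros x Hx; apply Hd; lra.
- intros x Hx. apply continuity_pt_filterlim.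
  apply (ex_derive_continuous (K := R_AbsRing) (V := R_NormedModule)
    (fun t => g t - f t)).
  exists (dg x - df x); apply Hd; lra.
- assert (df c <= dg c) by (apply Hle; lra).
  assert (0 <= (dg c - df c) * (b - a)) by (apply Rmult_le_pos; lra).
  lra.
Qed.

Lemma is_derive_nonneg_le (f df : R -> R) a b : a <= b ->
  (forall x, a <= x <= b -> is_derive f x (df x)) ->
  (forall x, a <= x <= b -> 0 <= df x) ->
  f a <= f b.
Proof.
intros Hab Hf Hpos.
enough (0 - 0 <= f b - f a) by lra.
apply (is_derive_le_increment (fun _ => 0) f (fun _ => 0) df a b); auto.
intros; auto_derive; reflexivity.
Qed.

Lemma ln_1p_ge_div y : 0 <= y -> y / (1 + y) <= ln (1 + y).
Proof.
intros Hy.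
assert (H := is_derive_nonneg_le (fun s => ln (1 + s) - s / (1 + s))
  (fun s => s / (1 + s) ^ 2) 0 y Hy).
cbv beta in H; rewrite Rplus_0_r, ln_1 in H.
enough (0 - 0 / 1 <= ln (1 + y) - y / (1 + y)) by lra.
apply H.
- intros x Hx; auto_derive; [lra | field; lra].
- intros x Hx; apply Rdiv_le_0_compat; [lra | apply pow_lt; lra].
Qed.

Lemma ln_1p_ge_quadratic u : 0 <= u -> u - u ^ 2 / 2 <= ln (1 + u).
Proof.
intros Hu.
assert (H := is_derive_nonneg_le (fun s => ln (1 + s) - s + s ^ 2 / 2)
  (fun s => s ^ 2 / (1 + s)) 0 u Hu).
cbv beta in H; rewrite Rplus_0_r, ln_1 in H.
enough (0 - 0 + 0 ^ 2 / 2 <= ln (1 + u) - u + u ^ 2 / 2) by lra.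
apply H.
- intros x Hx; auto_derive; [lra | field; lra].
- intros x Hx; apply Rdiv_le_0_compat; [nra | lra].
Qed.

Lemma ln_1p_le_cubic u : 0 <= u -> ln (1 + u) <= u - u ^ 2 / 2 + u ^ 3 / 3.
Proof.
intros Hu.
assert (H := is_derive_nonneg_le (fun s => s - s ^ 2 / 2 + s ^ 3 / 3 - ln (1 + s))
  (fun s => s ^ 3 / (1 + s)) 0 u Hu).
cbv beta in H; rewrite Rplus_0_r, ln_1 in H.
enough (0 - 0 ^ 2 / 2 + 0 ^ 3 / 3 - 0 <= u - u ^ 2 / 2 + u ^ 3 / 3 - ln (1 + u))
  by lra.
apply H.
- intros x Hx; auto_derive; [lra | field; lra].
- intros x Hx; apply Rdiv_le_0_compat; [apply pow_le | ]; lra.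
Qed.

Lemma mul_ln_1p_div_le a c : 0 < a <= 1 -> 0 <= c ->
  a * ln (1 + c / a) <= ln (1 + c).
Proof.
intros Ha Hc.
assert (H := is_derive_nonneg_le (fun s => s * ln (1 + c / s))
  (fun s => ln (1 + c / s) - (c / s) / (1 + c / s)) a 1 (proj2 Ha)).
cbv beta in H; rewrite Rdiv_1_r, Rmult_1_l in H.
apply H.
- intros s Hs.
  assert (0 <= c / s) by (apply Rdiv_le_0_compat; lra).
  auto_derive; [repeat split; lra | unfold Rdiv; field; split; nra].
- intros s Hs; assert (0 <= c / s) by (apply Rdiv_le_0_compat; lra).
  assert (H1 := ln_1p_ge_div (c / s)); lra.
Qed.

Definition g_gap (a t : R) : R := g t - g (a * t).

Definition g_gap_slope (a t : R) : R := ln (1 + / t) - a * ln (1 + / (a * t)).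

Lemma ln_1p_inv t : 0 < t -> ln (1 + / t) = ln (t + 1) - ln t.
Proof.
intros Ht; rewrite <- ln_div by lra; f_equal; field; lra.
Qed.

Lemma is_derive_g_gap a t : 0 < a -> 0 < t ->
  is_derive (g_gap a) t (g_gap_slope a t).
Proof.
intros Ha Ht; unfold g_gap_slope; rewrite !ln_1p_inv by nra.
unfold g_gap, g; auto_derive; [repeat split; nra | field; nra].
Qed.

Lemma g_gap_slope_ge0 a t : 0 < a <= 1 -> 0 < t -> 0 <= g_gap_slope a t.
Proof.
intros Ha Ht; unfold g_gap_slope.
replace (/ (a * t)) with (/ t / a) by (field; lra).
assert (H := mul_ln_1p_div_le a (/ t) Ha (Rlt_le _ _ (Rinv_0_lt_compat _ Ht))).
lra.
Qed.

Lemma g_gap_slope_le a t : 0 < a <= 1 -> 0 < t ->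
  g_gap_slope a t <= / (2 * a * t ^ 2) + / (3 * t ^ 3).
Proof.
intros Ha Ht; unfold g_gap_slope.
set (u := / t).
assert (Hu : 0 < u) by (apply Rinv_0_lt_compat; lra).
replace (/ (a * t)) with (u / a) by (unfold u; field; lra).
replace (/ (2 * a * t ^ 2)) with (u ^ 2 / (2 * a)) by (unfold u; field; lra).
replace (/ (3 * t ^ 3)) with (u ^ 3 / 3) by (unfold u; field; lra).
assert (Hup := ln_1p_le_cubic u (Rlt_le _ _ Hu)).
assert (Hlo := ln_1p_ge_quadratic (u / a)
  (Rlt_le _ _ (Rdiv_lt_0_compat _ _ Hu (proj1 Ha)))).
assert (Hlo' : u - u ^ 2 / (2 * a) <= a * ln (1 + u / a)).
{ replace (u - u ^ 2 / (2 * a)) with (a * (u / a - (u / a) ^ 2 / 2))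
    by (field; lra).
  apply Rmult_le_compat_l; lra. }
nra.
Qed.

Lemma g_gap_nondecreasing a x N : 0 < a <= 1 -> 0 < x -> x <= N -> g_gap a x <= g_gap a N.
Proof.
intros Ha Hx HxN.
apply (is_derive_nonneg_le _ (g_gap_slope a) x N HxN); intros t Ht.
- apply is_derive_g_gap; lra.
- apply g_gap_slope_ge0; lra.
Qed.

Lemma g_gap_increment_le a x N : 0 < a <= 1 -> 0 < x -> x <= N ->
  g_gap a N - g_gap a x <= / (2 * a * x) + / (6 * x ^ 2).
Proof.
intros Ha Hx HxN.
assert (H := is_derive_le_increment (g_gap a)
  (fun t => - (/ (2 * a * t) + / (6 * t ^ 2))) (g_gap_slope a)
  (fun t => / (2 * a * t ^ 2) + / (3 * t ^ 3)) x N HxN).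
assert (0 < / (2 * a * N)) by (apply Rinv_0_lt_compat; nra).
assert (0 < / (6 * N ^ 2)) by (apply Rinv_0_lt_compat; nra).
enough (g_gap a N - g_gap a x <=
  - (/ (2 * a * N) + / (6 * N ^ 2)) - - (/ (2 * a * x) + / (6 * x ^ 2))) by lra.
apply H; intros t Ht.
- apply is_derive_g_gap; lra.
- auto_derive; [repeat split; nra | field; nra].
- apply g_gap_slope_le; lra.
Qed.

Lemma EA_capacity_sub_tradeoff_rate_g eta NS lambda :
  EA_capacity g eta NS - tradeoff_rate g eta NS lambda
  = g_gap (1 - eta) NS - g_gap (1 - eta) (lambda * NS).
Proof.
unfold EA_capacity, tradeoff_rate, g_gap.
replace ((1 - eta) * lambda * NS) with ((1 - eta) * (lambda * NS)) by ring.
ring.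
Qed.

Lemma EA_capacity_sub_tradeoff_rate_g2 eta NS lambda :
  EA_capacity g2 eta NS - tradeoff_rate g2 eta NS lambda
  = (EA_capacity g eta NS - tradeoff_rate g eta NS lambda) / ln 2.
Proof.
assert (0 < ln 2) by (assert (H := ln_lt_2); lra).
unfold EA_capacity, tradeoff_rate, g2, g, log2; field; lra.
Qed.

Lemma EA_capacity_sub_tradeoff_rate_bounds eta NS lambda :
  0 <= eta < 1 -> 0 < NS -> 0 < lambda <= 1 ->
  2 <= lambda * (1 - eta) * NS ->
  0 <= EA_capacity g eta NS - tradeoff_rate g eta NS lambda
    <= 5 / (6 * lambda * NS * (1 - eta)).
Proof.
intros Heta HNS Hlambda H2.
rewrite EA_capacity_sub_tradeoff_rate_g.
set (a := 1 - eta) in *; set (x := lambda * NS).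
assert (Ha : 0 < a <= 1) by (unfold a; lra).
assert (Hax : 2 <= a * x) by (unfold x; nra).
assert (Hx : 2 <= x) by nra.
assert (HxN : x <= NS) by (unfold x; nra).
assert (Hlo := g_gap_nondecreasing a x NS Ha ltac:(lra) HxN).
assert (Hup := g_gap_increment_le a x NS Ha ltac:(lra) HxN).
replace (6 * lambda * NS * a) with (6 * a * x) by (unfold x; ring).
replace (5 / (6 * a * x)) with (/ (2 * a * x) + / (3 * a * x)) by (field; nra).
assert (/ (6 * x ^ 2) <= / (3 * a * x)) by (apply Rinv_le_contravar; nra).
lra.
Qed.

Theorem proposition4 :
  (forall eta NS lambda : R,
      0 <= eta < 1 -> 0 < NS -> 0 < lambda <= 1 ->
      2 <= lambda * (1 - eta) * NS ->
      EA_capacity g eta NS - tradeoff_rate g eta NS lambda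
        <= 5 / (6 * lambda * NS * (1 - eta)))
  /\
  (forall eta NS eps : R,
      0 <= eta < 1 -> 0 < NS -> 0 < eps ->
      let lambda := 5 / (6 * eps * NS * (1 - eta) * ln 2) in
      lambda <= 1 ->
      2 <= lambda * (1 - eta) * NS ->
      Rabs (EA_capacity g2 eta NS - tradeoff_rate g2 eta NS lambda) <= eps).
Proof.
split.
- intros eta NS lambda Heta HNS Hlambda H2.
  apply EA_capacity_sub_tradeoff_rate_bounds; assumption.
- intros eta NS eps Heta HNS Heps lambda Hlambda1 H2.
  assert (Hln2 : 0 < ln 2) by (assert (H := ln_lt_2); lra).
  assert (Hlambda : 0 < lambda).
  { apply Rdiv_lt_0_compat; [lra | repeat apply Rmult_lt_0_compat; lra]. }
  assert (Hbounds := EA_capacity_sub_tradeoff_rate_bounds eta NS lambda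
    Heta HNS (conj Hlambda Hlambda1) H2).
  replace (5 / (6 * lambda * NS * (1 - eta))) with (eps * ln 2) in Hbounds
    by (unfold lambda; field; repeat split; lra).
  rewrite EA_capacity_sub_tradeoff_rate_g2, Rabs_pos_eq
    by (apply Rdiv_le_0_compat; lra).
  apply Rle_div_l; lra.
Qed.
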